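(* Let $\mathbf{A},\mathbf{B}\in\mathbb{C}$ be constants and let $\mathcal{U},\mathcal{V},\mathcal{W},\mathcal{H}$ be as in the context. Then the system $$\frac{d\vartheta_2}{d\tau}=\frac i\pi\Big\{\eta+\frac{\pi^2}{12}(\vartheta_3^4+\vartheta_4^4)\Big\}\vartheta_2,\quad\frac{d\vartheta_3}{d\tau}=\mathcal U,\quad\frac{d\vartheta_4}{d\tau}=\mathcal V,\quad\frac{d\eta}{d\tau}=\mathcal W$$ can be written (where $\mathcal H\ne0$) in the gradient form $$\frac{d}{d\tau}\begin{pmatrix}\vartheta_2\\\vartheta_3\\\vartheta_4\\\eta\end{pmatrix}=\Omega(\vartheta,\eta)\begin{pmatrix}\mathcal H_{\vartheta_2}\\\mathcal H_{\vartheta_3}\\\mathcal H_{\vartheta_4}\\\mathcal H_\eta\end{pmatrix},\qquad \Omega(\vartheta,\eta)=\frac{\vartheta_2}{4\mathcal H}\begin{pmatrix}0&\mathcal U&\mathcal V&\mathcal W\\-\mathcal U&0&0&0\\-\mathcal V&0&0&0\\-\mathcal W&0&0&0\end{pmatrix},$$ with Hamilton function $\mathcal H$; the corresponding Poisson bracket $\Omega$ is degenerate ($\det\Omega\equiv0$) but single-valued.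
   Context: $\mathcal U=\frac i\pi\{\eta+\frac{\pi^2}{12}(\vartheta_3^4+\vartheta_4^4-3\mathbf B^4\vartheta_4^4)\}\vartheta_3$, $\mathcal V=\frac i\pi\{\eta+\frac{\pi^2}{12}(\vartheta_3^4+\vartheta_4^4-3\mathbf A^4\vartheta_3^4)\}\vartheta_4$, $\mathcal W=\frac i\pi2\eta^2-\frac{\pi^3}{72}i\{\vartheta_3^8+(9\mathbf A^4\mathbf B^4-6\mathbf A^4-6\mathbf B^4+2)\vartheta_3^4\vartheta_4^4+\vartheta_4^8\}$, and $\mathcal H(\vartheta_2,\vartheta_3,\vartheta_4,\eta)=\mathbf A^4\frac{\vartheta_3^4}{\vartheta_2^4}-\mathbf B^4\frac{\vartheta_4^4}{\vartheta_2^4}$. Subscripts on $\mathcal H$ denote partial derivatives. *)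

(* complex numbers are R[i] = complex R for R : realType
   (mathcomp-real-closed), viewed as a normed field over itself, so that
   derivatives ('D_1 f) of functions R[i] -> R[i] are complex derivatives. *)
From HB Require Import structures.
From mathcomp Require Import all_boot all_order all_algebra.
From mathcomp Require Import all_classical all_reals all_analysis.
From mathcomp Require Import complex.
Set Implicit Arguments. Unset Strict Implicit. Unset Printing Implicit Defensive.
Import Order.TTheory GRing.Theory Num.Theory.
Import numFieldNormedType.Exports.
Local Open Scope ring_scope.
Local Open Scope complex_scope.

Section Defs.
Variable R : realType.
Notation C := R[i].

Definition piC : C := (pi : R)%:C.
Definition iC : C := 'i.

Definition F2 (t2 t3 t4 e : C) : C :=
  iC / piC * (e + piC ^+ 2 / 12%:R * (t3 ^+ 4 + t4 ^+ 4)) * t2.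

Definition calU (A B t3 t4 e : C) : C :=
  iC / piC * (e + piC ^+ 2 / 12%:R *
     (t3 ^+ 4 + t4 ^+ 4 - 3%:R * B ^+ 4 * t4 ^+ 4)) * t3.

Definition calV (A B t3 t4 e : C) : C :=
  iC / piC * (e + piC ^+ 2 / 12%:R *
     (t3 ^+ 4 + t4 ^+ 4 - 3%:R * A ^+ 4 * t3 ^+ 4)) * t4.

Definition calW (A B t3 t4 e : C) : C :=
  iC / piC * 2%:R * e ^+ 2 - piC ^+ 3 / 72%:R * iC *
    (t3 ^+ 8 + (9%:R * A ^+ 4 * B ^+ 4 - 6%:R * A ^+ 4 - 6%:R * B ^+ 4 + 2%:R)
                 * t3 ^+ 4 * t4 ^+ 4 + t4 ^+ 8).

Definition calH (A B t2 t3 t4 e : C) : C :=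
  A ^+ 4 * (t3 ^+ 4 / t2 ^+ 4) - B ^+ 4 * (t4 ^+ 4 / t2 ^+ 4).

Definition field_vec (A B t2 t3 t4 e : C) : 'cV[C]_4 :=
  \col_(k < 4) [:: F2 t2 t3 t4 e; calU A B t3 t4 e; calV A B t3 t4 e;
                   calW A B t3 t4 e]`_k.

Definition gradH (A B t2 t3 t4 e : C) : 'cV[C]_4 :=
  \col_(k < 4)
   [:: 'D_1 (fun z : C^o => (calH A B z t3 t4 e : C^o)) t2;
       'D_1 (fun z : C^o => (calH A B t2 z t4 e : C^o)) t3;
       'D_1 (fun z : C^o => (calH A B t2 t3 z e : C^o)) t4;
       'D_1 (fun z : C^o => (calH A B t2 t3 t4 z : C^o)) e]`_k.

Definition Omega (A B t2 t3 t4 e : C) : 'M[C]_4 :=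
  let U := calU A B t3 t4 e in
  let V := calV A B t3 t4 e in
  let W := calW A B t3 t4 e in
  (t2 / (4%:R * calH A B t2 t3 t4 e)) *:
  \matrix_(k < 4, l < 4)
   nth (0 : C) (nth [::] [:: [:: 0; U; V; W];
       [:: - U; 0; 0; 0];
       [:: - V; 0; 0; 0];
       [:: - W; 0; 0; 0]] k) l.
End Defs.

(* Write H = K / t2^4 with K = A^4 t3^4 - B^4 t4^4. Then dH/dt2 = -4 H / t2, so
   the prefactor t2 / (4 H) turns the last three rows of Omega * grad H into
   U, V, W exactly. The first row is (t2 / K) (U A^4 t3^3 - V B^4 t4^3), and in
   U A^4 t3^3 - V B^4 t4^3 the two terms in A^4 B^4 t3^4 t4^4 cancel, leaving
   (i/pi) (eta + pi^2/12 (t3^4 + t4^4)) K. Finally Omega is degenerate because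
   its second and third columns vanish outside the first row. *)
From HB Require Import structures.
From mathcomp Require Import all_boot all_order all_algebra.
From mathcomp Require Import all_classical all_reals all_analysis.
From mathcomp Require Import complex.
From mathcomp Require Import fingroup perm ring.
Set Implicit Arguments. Unset Strict Implicit. Unset Printing Implicit Defensive.
Import Order.TTheory GRing.Theory Num.Theory.
Import numFieldNormedType.Exports.
Local Open Scope ring_scope.

Section Derivatives.
Variables (K : numFieldType) (V : normedModType K).

Lemma is_deriveV (f : V -> K) (x v : V) (df : K) : f x != 0 ->
  is_derive x v f df -> is_derive x v (fun y => (f y)^-1) (- (f x) ^- 2 *: df).
Proof.
move=> fx0 dfx; apply: DeriveDef; first exact: derivableV.
by rewrite deriveV // derive_val.
Qed.

Lemma is_derive_affine (f : V -> K) (x v : V) (a b df : K) :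
  is_derive x v f df -> is_derive x v (fun y => a * f y + b) (a * df).
Proof.
move=> dfx; have -> : (fun y => a * f y + b) = a \*: f + cst b by [].
by apply: is_derive_eq; rewrite addr0.
Qed.

Lemma is_derive_exprn (n : nat) (x : K^o) :
  is_derive x 1 (fun z : K^o => z ^+ n : K^o) (n%:R * x ^+ n.-1).
Proof.
have -> : (fun z : K^o => z ^+ n : K^o) = (@id K^o) ^+ n.
  by apply/funext => z; rewrite exprfctE.
by apply: is_derive_eq; rewrite [_%:A]mulr1.
Qed.

End Derivatives.

Lemma det_two_cols_in_row (K : comRingType) n (M : 'M[K]_n) (r j1 j2 : 'I_n) :
  j1 != j2 -> (forall i, i != r -> M i j1 = 0 /\ M i j2 = 0) -> \det M = 0.
Proof.
move=> j12 Mr; rewrite /determinant big1 // => s _.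
have [i [ir Mi0]] : exists i, i != r /\ M i (s i) = 0.
  have [i1r|i1r] := eqVneq ((s^-1)%g j1) r.
    have i2r : (s^-1)%g j2 != r by rewrite -i1r (inj_eq perm_inj) eq_sym.
    by exists ((s^-1)%g j2); rewrite permKV; case: (Mr _ i2r).
  by exists ((s^-1)%g j1); rewrite permKV; case: (Mr _ i1r).
by rewrite (bigD1 i) //= Mi0 mul0r mulr0.
Qed.

Section Hamiltonian.
Variables (R : realType) (A B : R[i]).
Notation C := R[i].

Definition calK (t3 t4 : C) : C := A ^+ 4 * t3 ^+ 4 - B ^+ 4 * t4 ^+ 4.

Lemma calHE (t2 t3 t4 e : C) : calH A B t2 t3 t4 e = calK t3 t4 / t2 ^+ 4.
Proof. by rewrite /calH /calK; ring. Qed.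

Lemma F2_mul_calK (t2 t3 t4 e : C) :
  F2 t2 t3 t4 e * calK t3 t4 =
  t2 * (calU A B t3 t4 e * (A ^+ 4 * t3 ^+ 3) - calV A B t3 t4 e * (B ^+ 4 * t4 ^+ 3)).
Proof. by rewrite /F2 /calU /calV /calK; ring. Qed.

Lemma is_derive_calH_t2 (t2 t3 t4 e : C) : t2 != 0 ->
  is_derive (t2 : C^o) 1 (fun z : C^o => calH A B z t3 t4 e : C^o)
    (- (4%:R * calK t3 t4) / t2 ^+ 5).
Proof.
move=> t20; have -> : (fun z : C^o => calH A B z t3 t4 e : C^o) =
    (fun z : C^o => calK t3 t4 * (z ^+ 4)^-1 + 0 : C^o).
  by apply/funext => z; rewrite calHE; ring.
have t40 : t2 ^+ 4 != 0 by rewrite expf_neq0.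
apply: is_derive_eq (is_derive_affine _ _ (is_deriveV t40 (is_derive_exprn 4 t2))) _.
by rewrite -[_ *: _]/(_ * _); field.
Qed.

Lemma is_derive_calH_t3 (t2 t3 t4 e : C) :
  is_derive (t3 : C^o) 1 (fun z : C^o => calH A B t2 z t4 e : C^o)
    (4%:R * A ^+ 4 * t3 ^+ 3 / t2 ^+ 4).
Proof.
have -> : (fun z : C^o => calH A B t2 z t4 e : C^o) =
    (fun z : C^o => A ^+ 4 / t2 ^+ 4 * z ^+ 4 - B ^+ 4 * t4 ^+ 4 / t2 ^+ 4 : C^o).
  by apply/funext => z; rewrite /calH; ring.
by apply: is_derive_eq (is_derive_affine _ _ (is_derive_exprn 4 _)) _; ring.
Qed.

Lemma is_derive_calH_t4 (t2 t3 t4 e : C) :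
  is_derive (t4 : C^o) 1 (fun z : C^o => calH A B t2 t3 z e : C^o)
    (- (4%:R * B ^+ 4 * t4 ^+ 3) / t2 ^+ 4).
Proof.
have -> : (fun z : C^o => calH A B t2 t3 z e : C^o) =
    (fun z : C^o => - (B ^+ 4 / t2 ^+ 4) * z ^+ 4 + A ^+ 4 * t3 ^+ 4 / t2 ^+ 4 : C^o).
  by apply/funext => z; rewrite /calH; ring.
by apply: is_derive_eq (is_derive_affine _ _ (is_derive_exprn 4 _)) _; ring.
Qed.

End Hamiltonian.

Theorem theorem9p7 (R : realType) (A B t2 t3 t4 e : R[i]) :
  t2 != 0 -> calH A B t2 t3 t4 e != 0 ->
  [/\ derivable (fun z : R[i]^o => (calH A B z t3 t4 e : R[i]^o)) t2 1,
      derivable (fun z : R[i]^o => (calH A B t2 z t4 e : R[i]^o)) t3 1,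
      derivable (fun z : R[i]^o => (calH A B t2 t3 z e : R[i]^o)) t4 1
    & derivable (fun z : R[i]^o => (calH A B t2 t3 t4 z : R[i]^o)) e 1] /\
  field_vec A B t2 t3 t4 e = Omega A B t2 t3 t4 e *m gradH A B t2 t3 t4 e /\
  \det (Omega A B t2 t3 t4 e) = 0.
Proof.
move=> t20 H0.
have d2 := is_derive_calH_t2 A B t3 t4 e t20.
have d3 := is_derive_calH_t3 A B t2 t3 t4 e.
have d4 := is_derive_calH_t4 A B t2 t3 t4 e.
have de : is_derive (e : R[i]^o) 1 (fun z : R[i]^o => calH A B t2 t3 t4 z : R[i]^o) 0
  := is_derive_cst _ _ _.
split; first by split; exact: ex_derive.
split; last first.
  rewrite /Omega detZ (@det_two_cols_in_row _ _ _ 0 1 2) ?mulr0 // => i.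
  by case: i => [[|[|[|[|?]]]] ?]; rewrite // !mxE.
have K0 : calK A B t3 t4 != 0.
  by move: H0; rewrite calHE mulf_eq0 negb_or => /andP[].
apply/matrixP => i j; rewrite ord1 /gradH /Omega !derive_val /field_vec calHE.
rewrite !mxE !big_ord_recr big_ord0 /= !mxE /=.
case: i => [[|[|[|[|?]]]] ?] //=.
  by apply: (mulIf K0); rewrite F2_mul_calK; field; rewrite t20 K0.
all: by field; rewrite t20 K0.
Qed.
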